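(* Let $K$ be a field, $c\in K\setminus\{0\}$, $n\ge1$, and let $f,g$ be $c$-friezes of order $n$ over $K$. If there is $a\in\mathbb{Z}$ such that $f(a+m,a+m)=g(a+m,a+m)$ for $m=0,1,\dots,n+2$ (i.e. $f$ and $g$ agree on $n+3$ consecutive elements of the first row), then $f=g$.
   Context: The $c$-continuant polynomials $P_k=P_k^c$ ($k\ge-1$) are defined by $P_{-1}=0$, $P_0=1$, and for $k\ge1$, $P_k(x_1,\dots,x_k)=x_kP_{k-1}(x_1,\dots,x_{k-1})+cP_{k-2}(x_1,\dots,x_{k-2})$. A family $(x_i)_{i\in\mathbb{Z}}$ in $K$ is $n$-admissible if $P_{n+2}(x_i,\dots,x_{i+n+1})=0$ for all $i$. Let $\mathbb{B}_n=\{(i,j)\in\mathbb{Z}^2:-2\le j-i\le n+1\}$. A $c$-frieze of order $n$ is a function $f:\mathbb{B}_n\to K$ for which there is an $n$-admissible family $(x_i)$ with $f(i,j)=P_{j-i+1}(x_i,\dots,x_j)$ for all $(i,j)\in\mathbb{B}_n$; its first row consists of the values $f(i,i)=x_i$. *)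

From mathcomp Require Import all_boot all_algebra.
Set Implicit Arguments. Unset Strict Implicit. Unset Printing Implicit Defensive.
Import GRing.Theory.
Local Open Scope ring_scope.

(* cont c x i k = P_k^c (x_i, x_{i+1}, ..., x_{i+k-1}) for k : nat,
   following P_0 = 1, P_{-1} = 0, P_k = x_k P_{k-1} + c P_{k-2}. *)
Fixpoint cont_aux (K : fieldType) (c : K) (x : int -> K) (i : int) (k : nat)
  : K * K :=
  (* returns (P_k, P_{k-1}) *)
  match k with
  | O => (1, 0)
  | S k' => let p := cont_aux c x i k' in
            (x (i + k'%:Z)%R * p.1 + c * p.2, p.1)
  end.

Definition cont (K : fieldType) (c : K) (x : int -> K) (i : int) (k : nat) : K :=
  (cont_aux c x i k).1.

(* P_{j-i+1}(x_i,...,x_j) for an integer length j-i+1 >= -1; length -1 gives P_{-1}=0. *)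
Definition contZ (K : fieldType) (c : K) (x : int -> K) (i j : int) : K :=
  match (j - i + 1)%R with
  | Posz k => cont c x i k
  | Negz _ => 0
  end.

Definition admissible (K : fieldType) (c : K) (n : nat) (x : int -> K) : Prop :=
  forall i : int, cont c x i n.+2 = 0.

Definition inB (n : nat) (i j : int) : bool :=
  ((-2 : int) <= j - i) && (j - i <= (n.+1)%:Z).

(* A c-frieze of order n: a function on B_n (represented as a function on
   int * int, only its values on B_n being relevant) arising from an
   n-admissible family. *)
Definition is_frieze (K : fieldType) (c : K) (n : nat) (f : int -> int -> K) : Prop :=
  exists x : int -> K, admissible c n x /\
    forall i j : int, inB n i j -> f i j = contZ c x i j.

(* An n-admissible family is determined by any n+1 consecutive entries.
   Cassini's identity P_{n+1}(x_i..x_{i+n}) P_{n+1}(x_{i+1}..x_{i+n+1}) = (-c)^{n+1}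
   (valid since P_{n+2} vanishes) shows that the continuants of length n+1 never
   vanish when c != 0.  The relation P_{n+2} = 0, expanded either at its last or at
   its first entry, is then affine in that entry with invertible slope, so a window
   of n+1 agreeing entries propagates one step to the right and one to the left.
   The first row of a frieze is its family, hence two friezes agreeing there on
   n+3 >= n+1 consecutive entries come from the same family. *)
From mathcomp Require Import all_boot all_algebra.
From mathcomp Require Import zify ring.
Set Implicit Arguments. Unset Strict Implicit. Unset Printing Implicit Defensive.
Import GRing.Theory.
Local Open Scope ring_scope.

Section Continuants.
Variables (K : fieldType) (c : K).
Implicit Types (x y : int -> K) (i : int) (k : nat).

Lemma cont0 x i : cont c x i 0 = 1.
Proof. by []. Qed.

Lemma cont1 x i : cont c x i 1 = x i.
Proof. by rewrite /cont /= addr0 mulr1 mulr0 addr0. Qed.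

Lemma contSS x i k :
  cont c x i k.+2 = x (i + k.+1%:Z) * cont c x i k.+1 + c * cont c x i k.
Proof. by []. Qed.

(* The two expansions are proved jointly, since the step for length k+3 needs
   the statement for both k+1 and k+2. *)
Lemma contSS_first_pair x k i :
  cont c x i k.+2 = x i * cont c x (i + 1) k.+1 + c * cont c x (i + 2) k /\
  cont c x i k.+3 = x i * cont c x (i + 1) k.+2 + c * cont c x (i + 2) k.+1.
Proof.
elim: k i => [|k IH] i.
  have e2 : x (i + 2%:Z) = x (i + 1 + 1%:Z) by congr x; lia.
  have e3 : x (i + 2%:Z) = x (i + 2) by [].
  by rewrite !contSS !cont1 !cont0 -e2 e3; split; ring.
have [A B] := IH i.
split=> //; rewrite [cont c x i k.+4]contSS B A.
rewrite [cont c x (i + 1) k.+3]contSS [cont c x (i + 2) k.+2]contSS.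
have e1 : x (i + k.+3%:Z) = x (i + 1 + k.+2%:Z) by congr x; lia.
have e2 : x (i + k.+3%:Z) = x (i + 2 + k.+1%:Z) by congr x; lia.
rewrite -e1 -e2; ring.
Qed.

Lemma contSS_first x i k :
  cont c x i k.+2 = x i * cont c x (i + 1) k.+1 + c * cont c x (i + 2) k.
Proof. by case: (contSS_first_pair x k i). Qed.

Lemma cassini x i k :
  cont c x i k.+1 * cont c x (i + 1) k.+1 - cont c x i k.+2 * cont c x (i + 1) k
  = (- c) ^+ k.+1.
Proof.
elim: k => [|k IH].
  by rewrite contSS !cont1 !cont0 expr1; ring.
rewrite [cont c x i k.+3]contSS [cont c x (i + 1) k.+2]contSS.
have e : x (i + 1 + k.+1%:Z) = x (i + k.+2%:Z) by congr x; lia.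
rewrite e exprS -IH; ring.
Qed.

Definition eq_window x y i k :=
  forall t : nat, (t < k)%N -> x (i + t%:Z) = y (i + t%:Z).

Lemma eq_window_trunc x y i k : eq_window x y i k.+1 -> eq_window x y i k.
Proof. by move=> H t Ht; apply: H; lia. Qed.

Lemma eq_window_behead x y i k : eq_window x y i k.+1 -> eq_window x y (i + 1) k.
Proof.
move=> H t Ht; have := H t.+1 Ht.
by have -> : i + t.+1%:Z = i + 1 + t%:Z by lia.
Qed.

Lemma cont_eq_window x y i k : eq_window x y i k -> cont c x i k = cont c y i k.
Proof.
rewrite /cont => w; congr fst; elim: k w => [|k IH] w //=.
by rewrite IH ?w //; apply: eq_window_trunc.
Qed.

Lemma contZ_eq x y i j : x =1 y -> contZ c x i j = contZ c y i j.
Proof.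
move=> xy; rewrite /contZ; case: (j - i + 1) => // k.
by apply: cont_eq_window => t _.
Qed.

Variable n : nat.
Hypothesis c_neq0 : c != 0.

Lemma admissible_cont_neq0 x i : admissible c n x -> cont c x i n.+1 != 0.
Proof.
move=> adm_x; have := cassini x i n; rewrite adm_x mul0r subr0 => e.
have : (- c) ^+ n.+1 != 0 by rewrite expf_neq0 // oppr_eq0.
by rewrite -e mulf_eq0 negb_or => /andP[].
Qed.

Variables (x y : int -> K).
Hypotheses (adm_x : admissible c n x) (adm_y : admissible c n y).

Lemma eq_window_next i :
  eq_window x y i n.+1 -> x (i + n.+1%:Z) = y (i + n.+1%:Z).
Proof.
move=> w; have ex := adm_x i; have ey := adm_y i.
rewrite contSS in ex; rewrite contSS -(cont_eq_window w) in ey.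
rewrite -(cont_eq_window (eq_window_trunc w)) in ey.
apply: (mulIf (admissible_cont_neq0 i adm_x)).
by apply: (addIr (c * cont c x i n)); rewrite ex ey.
Qed.

Lemma eq_window_prev i : eq_window x y (i + 1) n.+1 -> x i = y i.
Proof.
move=> w; have ex := adm_x i; have ey := adm_y i.
rewrite contSS_first in ex; rewrite contSS_first -(cont_eq_window w) in ey.
have w2 : eq_window x y (i + 2) n.
  by have := eq_window_behead w; have -> : i + 1 + 1 = i + 2 by ring.
rewrite -(cont_eq_window w2) in ey.
rewrite ![x i * _]mulrC ![y i * _]mulrC in ex ey.
apply: (mulfI (admissible_cont_neq0 (i + 1) adm_x)).
by apply: (addIr (c * cont c x (i + 2) n)); rewrite ex ey.
Qed.

Lemma eq_window_succ i : eq_window x y i n.+1 -> eq_window x y (i + 1) n.+1.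
Proof.
move=> w t; rewrite ltnS leq_eqVlt => /orP[/eqP-> | lt_tn].
  have -> : i + 1 + n%:Z = i + n.+1%:Z by lia.
  exact: eq_window_next.
exact: eq_window_behead w t lt_tn.
Qed.

Lemma eq_window_pred i : eq_window x y (i + 1) n.+1 -> eq_window x y i n.+1.
Proof.
move=> w [_|t lt_tn]; first by rewrite addr0; apply: eq_window_prev.
have -> : i + t.+1%:Z = i + 1 + t%:Z by lia.
by apply: w; lia.
Qed.

Lemma admissible_eq_window a : eq_window x y a n.+1 -> x =1 y.
Proof.
move=> w z.
have up k : eq_window x y (a + k%:Z) n.+1.
  elim: k => [|k IH]; first by rewrite addr0.
  have -> : a + k.+1%:Z = a + k%:Z + 1 by lia.
  exact: eq_window_succ.
have down k : eq_window x y (a - k%:Z) n.+1.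
  elim: k => [|k IH]; first by rewrite subr0.
  apply: eq_window_pred; have -> : a - k.+1%:Z + 1 = a - k%:Z by lia.
  exact: IH.
have [-> | ->] : z = a + `|z - a|%N%:Z \/ z = a - `|z - a|%N%:Z by lia.
  by have := up `|z - a|%N 0%N; rewrite addr0; apply.
by have := down `|z - a|%N 0%N; rewrite addr0; apply.
Qed.

End Continuants.

Lemma frieze_diag (K : fieldType) (c : K) n f x :
  (forall i j, inB n i j -> f i j = contZ c x i j) -> forall z, f z z = x z.
Proof.
move=> fx z; rewrite fx; last by rewrite /inB subrr.
by rewrite /contZ subrr add0r; apply: cont1.
Qed.

Theorem mainTheorem12 (K : fieldType) (c : K) (n : nat) (f g : int -> int -> K) :
  c != 0 -> (1 <= n)%N ->
  is_frieze c n f -> is_frieze c n g ->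
  (exists a : int, forall m : nat, (m <= n.+2)%N ->
      f (a + m%:Z) (a + m%:Z) = g (a + m%:Z) (a + m%:Z)) ->
  forall i j : int, inB n i j -> f i j = g i j.
Proof.
move=> c_neq0 _ [x [adm_x fx]] [y [adm_y gy]] [a fg_row] i j ij.
have xy : x =1 y.
  apply: (admissible_eq_window c_neq0 adm_x adm_y (a := a)) => t lt_tn.
  by rewrite -(frieze_diag fx) -(frieze_diag gy) fg_row //; lia.
by rewrite fx // gy //; apply: contZ_eq.
Qed.
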